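(* Let $Y_1,Y_2,\ldots$ be i.i.d. Bernoulli$(1/2)$ and let $(Z^k)_k$ be generated by the bit-drop scheme described in the context, independently of $(Y_i)$. For integers $l\ge1$, $j\ge 0$ let $L^a_l(j)$ be the length of a longest common subsequence of $Z^j$ and $Y_1\ldots Y_l$. There are constants $C,c>0$ such that for every $\delta\in(0,1)$ and every $k\ge1$, $$P\Big(L^a_k\big(\lfloor 2(1-\delta)k\rfloor\big)=k\Big)\leq Ce^{-c\delta^2k}.$$
   Context: Bit-drop scheme: let $V_1,V_2,\ldots$ be i.i.d. Bernoulli$(1/2)$ and let $T_3,T_4,\ldots$ be independent, independent of $(V_k)$, with $T_{k+1}$ uniform on $\{2,\ldots,k\}$. Set $Z^2:=V_1V_2$ and, given $Z^k=Z^k_1\ldots Z^k_k$, define $Z^{k+1}_j:=Z^k_j$ for $j<T_{k+1}$, $Z^{k+1}_{T_{k+1}}:=V_{k+1}$, $Z^{k+1}_j:=Z^k_{j-1}$ for $T_{k+1}<j\le k+1$. Convention: $Z^0$ empty, $Z^1:=V_1$. *)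

From mathcomp Require Import all_boot all_order all_algebra.
From mathcomp Require Import all_classical all_reals all_analysis.
Set Implicit Arguments. Unset Strict Implicit. Unset Printing Implicit Defensive.
Import Order.TTheory GRing.Theory Num.Theory.
Local Open Scope ring_scope.

(* Bit-drop scheme.  v i = V_i (i >= 1), t i = T_i (i >= 3).
   Z^0 = [::], Z^1 = V_1, Z^2 = V_1 V_2, and Z^{k+1} is Z^k with V_{k+1}
   inserted so that it becomes letter number T_{k+1} (1-indexed). *)
Fixpoint bitdrop (v : nat -> bool) (t : nat -> nat) (k : nat) : seq bool :=
  match k with
  | 0 => [::]
  | k'.+1 =>
      if (k' == 0)%N then [:: v 1%N]
      else if (k' == 1)%N then [:: v 1%N; v 2%N]
      else let z := bitdrop v t k' in
           take (t k).-1 z ++ v k :: drop (t k).-1 z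
  end.

Definition lcs (s1 s2 : seq bool) : nat :=
  (\max_(m : (size s1).-tuple bool | subseq (mask m s1) s2) size (mask m s1))%N.

(* Finite sample space carrying (V_1..V_j), (T_3..T_j), (Y_1..Y_k). *)
Definition Omega (j k : nat) : finType :=
  (j.-tuple bool * {ffun 'I_j.+1 -> 'I_j.+1} * k.-tuple bool)%type.

Definition valid_T (j : nat) (t : {ffun 'I_j.+1 -> 'I_j.+1}) : bool :=
  [forall i : 'I_j.+1,
     if (3 <= i)%N then ((2 <= t i) && (t i < i))%N else t i == ord0].

Definition Vof (j : nat) (v : j.-tuple bool) : nat -> bool :=
  fun i => nth false v i.-1.

Definition Tof (j : nat) (t : {ffun 'I_j.+1 -> 'I_j.+1}) : nat -> nat :=
  fun i => if (i <= j)%N then nat_of_ord (t (inord i)) else 0%N.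

Definition Lak_event (j k : nat) (w : Omega j k) : bool :=
  let: (v, t, y) := w in
  lcs (bitdrop (Vof v) (Tof t) j) y == k.

(* Its probability: the V_i and Y_i are i.i.d. uniform bits, T_i uniform on
   {2..i-1}, all independent; on the finitely many relevant coordinates the
   law is the uniform distribution on admissible outcomes. *)
Definition Lak_prob (R : realType) (j k : nat) : R :=
  (#|[set w : Omega j k | valid_T w.1.2 && Lak_event w]|%:R /
   #|[set w : Omega j k | valid_T w.1.2]|%:R).

From mathcomp Require Import all_boot all_order all_algebra.
From mathcomp Require Import all_classical all_reals all_analysis.
From mathcomp Require Import ring lra.
Import Order.TTheory GRing.Theory Num.Theory.
Local Open Scope ring_scope.

(* Once the insertion positions T are fixed, the bit-drop map is a bijection
   of {0,1}^j, so Z^j is a uniform word independent of Y.  The event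
   L^a_k(j) = k says that Y is a subsequence of Z^j, and for every x >= 1 at
   most (1 + x)^j / x^k words of length j contain a given word of length k
   (induction on j, splitting on the first letter).  Hence the probability is
   at most (1 + x)^j / (x^k 2^j); for x = 1 + delta/2 and
   j <= 2 (1 - delta) k this is at most exp (- delta^2 k / 4). *)

Lemma size_bitdrop v t n : size (bitdrop v t n) = n.
Proof.
elim: n => [|[|[|n]] IH] //=.
by rewrite size_cat /= addnS -size_cat cat_take_drop IH.
Qed.

Lemma bitdrop_insert v t n : bitdrop v t n.+3 =
  take (t n.+3).-1 (bitdrop v t n.+2) ++ v n.+3 :: drop (t n.+3).-1 (bitdrop v t n.+2).
Proof. by []. Qed.

Lemma bitdrop_inj v v' t n : bitdrop v t n = bitdrop v' t n ->
  forall i, (0 < i <= n)%N -> v i = v' i.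
Proof.
elim: n => [|[|[|n]] IH]; first by move=> _ [].
- by move=> [] e [|[|i]].
- by move=> [] e1 e2 [|[|[|i]]].
rewrite !bitdrop_insert => /eqP; rewrite eqseq_cat ?size_take ?size_bitdrop //.
case/andP=> [/eqP e_take /eqP[e_new e_drop]] i /andP[i_gt0].
have e_prev : bitdrop v t n.+2 = bitdrop v' t n.+2.
  by rewrite -(cat_take_drop (t n.+3).-1 (bitdrop v t _)) e_take e_drop cat_take_drop.
rewrite leq_eqVlt ltnS => /orP[/eqP -> //|i_le].
by apply: IH => //; rewrite i_gt0.
Qed.

Lemma lcs_eq_size_subseq z y : lcs z y = size y -> subseq y z.
Proof.
set m0 := [tuple of nseq (size z) false].
have sub0 : subseq (mask m0 z) y by rewrite mask_false sub0seq.
rewrite /lcs (bigop.bigmax_eq_arg m0 sub0); case: arg_maxnP => // m sub_m _ eq_size.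
have [_] := size_subseq_leqif sub_m; rewrite eq_size eqxx => /esym/eqP <-.
exact: mask_subseq.
Qed.

Lemma sum_tuple_cons (R : nmodType) (T : finType) n (F : n.+1.-tuple T -> R) :
  \sum_(z : n.+1.-tuple T) F z = \sum_(b : T) \sum_(z : n.-tuple T) F [tuple of b :: z].
Proof.
rewrite pair_big /= (reindex (fun p : T * n.-tuple T => [tuple of p.1 :: p.2])) //=.
exists (fun z : n.+1.-tuple T => (thead z, [tuple of behead z])) => [[b z] _|z _] /=.
  by congr pair; apply: val_inj.
by case/tupleP: z => b z; apply: val_inj.
Qed.

Lemma sum_subseq_cons (R : nmodType) (F : bool -> R) n (c : bool) (y : seq bool) :
  \sum_(z : n.+1.-tuple bool) F (subseq (c :: y) z) =
  \sum_(z : n.-tuple bool) F (subseq y z) + \sum_(z : n.-tuple bool) F (subseq (c :: y) z).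
Proof. by rewrite sum_tuple_cons big_bool /=; case: c => //=; rewrite addrC. Qed.

Lemma sum_subseq_le (R : realFieldType) (x : R) n (y : seq bool) : 1 <= x ->
  \sum_(z : n.-tuple bool) ((subseq y z)%:R : R) <= (1 + x) ^+ n / x ^+ size y.
Proof.
move=> x_ge1; have x_gt0 : 0 < x by apply: lt_le_trans x_ge1.
have sum_nil m : \sum_(z : m.-tuple bool) ((subseq [::] z)%:R : R) <= (1 + x) ^+ m / x ^+ 0.
  under eq_bigr do rewrite sub0seq.
  rewrite sumr_const card_tuple card_bool expr0 divr1 mulr1n natrX.
  by apply: lerXn2r; rewrite ?nnegrE; lra.
elim: n y => [|n IH] [|c y]; rewrite ?sum_nil //.
  rewrite big1 => [|z _]; last by rewrite tuple0.
  by apply: divr_ge0; apply: exprn_ge0; lra.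
rewrite (sum_subseq_cons _ (fun b => b%:R)).
have -> : (1 + x) ^+ n.+1 / x ^+ size (c :: y) =
          (1 + x) ^+ n / x ^+ size y + (1 + x) ^+ n / x ^+ size (c :: y).
  by rewrite /= !exprS; field; rewrite expf_neq0 gt_eqF.
exact: lerD (IH y) (IH (c :: y)).
Qed.

Definition bitdrop_tuple j (t : nat -> nat) (v : j.-tuple bool) : j.-tuple bool :=
  Tuple (introT eqP (size_bitdrop (Vof v) t j)).

Lemma bitdrop_tuple_inj j t : injective (bitdrop_tuple j t).
Proof.
move=> v1 v2 /(congr1 val) /bitdrop_inj eq_v.
apply: val_inj; apply: (@eq_from_nth _ false); rewrite !size_tuple // => i lt_ij.
exact: (eq_v i.+1).
Qed.

Lemma sum_lcs_full_le (R : realFieldType) (x : R) j k t : 1 <= x ->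
  \sum_(v : j.-tuple bool) \sum_(y : k.-tuple bool)
     ((lcs (bitdrop (Vof v) t j) y == k)%:R : R) <= 2 ^+ k * ((1 + x) ^+ j / x ^+ k).
Proof.
move=> x_ge1; rewrite exchange_big.
have per_word (y : k.-tuple bool) : \sum_(v : j.-tuple bool)
    ((lcs (bitdrop (Vof v) t j) y == k)%:R : R) <= (1 + x) ^+ j / x ^+ k.
  have := @sum_subseq_le R x j y x_ge1.
  rewrite (reindex_inj (@bitdrop_tuple_inj j t)) size_tuple; apply: le_trans.
  apply: ler_sum => v _; rewrite ler_nat; case: eqP => // lcs_full.
  by rewrite lcs_eq_size_subseq ?size_tuple.
apply: le_trans (ler_sum _ (fun y _ => per_word y)) _.
by rewrite sumr_const card_tuple card_bool -natrX mulr_natl.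
Qed.

Lemma sum_ratio_le (R : realFieldType) (I : finType) (a b : I -> R) (beta : R) :
  0 <= beta -> (forall i, 0 <= b i) -> (forall i, a i <= beta * b i) ->
  (\sum_i a i) / (\sum_i b i) <= beta.
Proof.
move=> beta_ge0 b_ge0 le_ab.
have [->|sum_b_neq0] := eqVneq (\sum_i b i) 0; first by rewrite invr0 mulr0.
have sum_b_gt0 : 0 < \sum_i b i by rewrite lt_def sum_b_neq0 sumr_ge0.
by rewrite ler_pdivrMr // mulr_sumr ler_sum.
Qed.

Lemma natr_card_Omega (R : pzSemiRingType) j k (P : pred (Omega j k)) :
  (#|[set w | P w]|%:R : R) =
  \sum_(t : {ffun 'I_j.+1 -> 'I_j.+1}) \sum_(v : j.-tuple bool) \sum_(y : k.-tuple bool)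
    (P (v, t, y))%:R.
Proof.
rewrite -sum1dep_card natr_sum big_mkcond exchange_big !pair_big /=.
by apply: eq_bigr => -[[v t] y] _; case: (P _).
Qed.

Lemma Lak_prob_le (R : realType) (x : R) j k : 1 <= x ->
  Lak_prob R j k <= (1 + x) ^+ j / x ^+ k / 2 ^+ j.
Proof.
move=> x_ge1; have x_gt0 : 0 < x by apply: lt_le_trans x_ge1.
rewrite /Lak_prob !natr_card_Omega /=; apply: sum_ratio_le => [|t|t].
- by rewrite !divr_ge0 ?exprn_ge0 //; lra.
- by do 2 (apply: sumr_ge0 => ? _); apply: ler0n.
case: (valid_T t) => /=; last first.
  by rewrite !big1 ?mulr0 // => v _; rewrite big1.
apply: le_trans (sum_lcs_full_le _ _ _ _ (Tof t) x_ge1) _.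
do 2 rewrite sumr_const card_tuple card_bool.
rewrite -mulrnA natrM !natrX.
by rewrite [leRHS]mulrCA divfK ?expf_neq0.
Qed.

Lemma exprn_le_expR (R : realType) (u : R) n : -1 <= u -> (1 + u) ^+ n <= expR (n%:R * u).
Proof.
move=> u_ge; rewrite expRM_natl lerXn2r ?nnegrE ?expR_ge0 ?expR_ge1Dx //; lra.
Qed.

Lemma Lak_bound_le_expR (R : realType) (d : R) (j k : nat) : 0 < d < 1 ->
  j%:R <= 2 * (1 - d) * k%:R ->
  (1 + (1 + d / 2)) ^+ j / (1 + d / 2) ^+ k / 2 ^+ j <= expR (- (1 / 4 * d ^+ 2 * k%:R)).
Proof.
move=> /andP[d_gt0 d_lt1] j_le.
have -> : (1 + (1 + d / 2)) ^+ j / (1 + d / 2) ^+ k / 2 ^+ j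
        = (1 + d / 4) ^+ j * (1 + - (d / (2 + d))) ^+ k.
  rewrite mulrAC -expr_div_n -exprVn; congr (_ ^+ _ * _ ^+ _); field; lra.
have le_j : (1 + d / 4) ^+ j <= expR (j%:R * (d / 4)) by apply: exprn_le_expR; lra.
have le_k : (1 + - (d / (2 + d))) ^+ k <= expR (k%:R * - (d / (2 + d))).
  by apply: exprn_le_expR; rewrite lerN2 ler_pdivrMr; lra.
apply: le_trans (ler_pM _ _ le_j le_k) _.
- by rewrite exprn_ge0 //; lra.
- by rewrite exprn_ge0 // subr_ge0 ler_pdivrMr; lra.
rewrite -expRD ler_expR.
have le_ratio : d / 2 - d ^+ 2 / 4 <= d / (2 + d).
  rewrite ler_pdivlMr; last lra.
  have : 0 <= d ^+ 3 by rewrite exprn_ge0 // ltW.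
  rewrite !exprSr expr0 mul1r; nra.
have : 0 <= k%:R * (d / (2 + d) - (d / 2 - d ^+ 2 / 4)) by rewrite mulr_ge0 // subr_ge0.
have : 0 <= d * (2 * (1 - d) * k%:R - j%:R) by rewrite mulr_ge0 ?subr_ge0 // ltW.
rewrite expr2; nra.
Qed.

Theorem lemma15 (R : realType) :
  exists C c : R, 0 < C /\ 0 < c /\
    forall (delta : R) (k : nat), 0 < delta < 1 -> (1 <= k)%N ->
      Lak_prob R (Num.truncn (2 * (1 - delta) * k%:R)) k
        <= C * expR (- (c * delta ^+ 2 * k%:R)).
Proof.
exists 1, (1 / 4); split; first lra; split; first lra.
move=> d k d01 _; rewrite mul1r.
set j := Num.truncn _.
have j_le : j%:R <= 2 * (1 - d) * k%:R.
  by rewrite truncn_le mulr_ge0 //; case/andP: d01 => _; lra.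
have x_ge1 : (1 : R) <= 1 + d / 2 by case/andP: d01; lra.
exact: le_trans (Lak_prob_le _ _ _ _ x_ge1) (Lak_bound_le_expR _ _ _ _ d01 j_le).
Qed.
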